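(* GREEDY and RANKING have online competitive ratio $0$ for IFM: for every $\varepsilon>0$ there exists an IFM instance on which $\min_{i\in I}\mathbb E[Z_i]\le\varepsilon\cdot\mathrm{OPT}$ under GREEDY, and likewise an instance on which this holds under RANKING. Since IFM is the special case of GFM in which every group is a singleton $\{i\}$, the same holds for GFM.
   Context: Model. An instance consists of a finite bipartite graph $(I,J,E)$, where $I$ is the set of offline agents and $J$ the set of online agent types, with $|J|=T$, together with problem-specific data described below. For $i\in I$ let $\mathcal N_i=\{j\in J:(i,j)\in E\}$ and for $j\in J$ let $\mathcal N_j=\{i\in I:(i,j)\in E\}$; write $i\sim j$ (equivalently $j\sim i$) when $(i,j)\in E$. There are $T$ rounds $t=1,\dots,T$; in each round exactly one online agent arrives, whose type is drawn uniformly at random from $J$ (each type with probability $1/T$), independently across rounds. Each offline agent can be matched at most once. When an online agent of type $j$ arrives, an online algorithm (which knows the instance but not future arrivals) must immediately and irrevocably either reject it or match it to a currently unmatched $i\in\mathcal N_j$. Let $Z_i$ be the indicator that offline agent $i$ is matched by the end. Objectives: IFM maximizes $\min_{i\in I}\mathbb E[Z_i]$; GFM, given a collection $\mathcal G$ of nonempty subsets of $I$ (groups, possibly overlapping), maximizes $\min_{G\in\mathcal G}\frac1{|G|}\sum_{i\in G}\mathbb E[Z_i]$. A clairvoyant policy observes the entire arrival sequence before choosing (possibly randomly) which arrivals to match to which compatible unmatched offline agents; the clairvoyant optimum $\mathrm{OPT}$ is the supremum of the objective over clairvoyant policies. GREEDY (for IFM): when an online agent of type $j$ arrives, if it has at least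 one currently unmatched neighbor, match it to one chosen uniformly at random among its currently unmatched neighbors; otherwise reject. RANKING: before the online phase draw a uniformly random permutation $\pi$ of $I$; when an online agent of type $j$ arrives, match it to the currently unmatched neighbor of $j$ that comes earliest in $\pi$, or reject if none exists. *)

From HB Require Import structures.
From mathcomp Require Import all_boot all_order all_algebra all_fingroup.
From mathcomp Require Import all_classical all_reals.
Set Implicit Arguments. Unset Strict Implicit. Unset Printing Implicit Defensive.
Import Order.TTheory GRing.Theory Num.Theory.
Local Open Scope ring_scope.
Local Open Scope classical_set_scope.

(* An instance: offline agents I, online types J, edge relation E i j.
   T = #|J| rounds; an arrival sequence is a #|J|-tuple of types, each
   sequence having probability (1/T)^T. *)
Definition arrivals (J : finType) := (#|J|).-tuple J.

Definition nrounds_weight (R : realType) (J : finType) : R :=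
  ((#|J|%:R : R) ^+ #|J|)^-1.

Definition unmatched_nbrs (I J : finType) (E : I -> J -> bool)
  (S : {set I}) (j : J) : {set I} := [set k | E k j & k \notin S].

(* GREEDY: probability that i is matched at the end, given the remaining
   arrivals s and current matched set S *)
Fixpoint greedy_prob (R : realType) (I J : finType) (E : I -> J -> bool)
  (s : seq J) (S : {set I}) (i : I) {struct s} : R :=
  match s with
  | [::] => if i \in S then 1 else 0
  | j :: s' =>
      let N := unmatched_nbrs E S j in
      if N == finset.set0 then greedy_prob R E s' S i
      else (#|N|%:R)^-1 * \sum_(k in N) greedy_prob R E s' (k |: S) i
  end.

Definition greedy_EZ (R : realType) (I J : finType) (E : I -> J -> bool)
  (i : I) : R :=
  nrounds_weight R J * \sum_(s : arrivals J) greedy_prob R E s finset.set0 i.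

(* RANKING: pi ranks agent k at position enum_rank (pi k); the earliest
   unmatched neighbour is the one of minimal position. *)
Definition earliest (I : finType) (pi : {perm I}) (N : {set I}) : option I :=
  [pick k in N | [forall k' in N, (enum_rank (pi k) <= enum_rank (pi k'))%N]].

Fixpoint ranking_final (I J : finType) (E : I -> J -> bool) (pi : {perm I})
  (s : seq J) (S : {set I}) {struct s} : {set I} :=
  match s with
  | [::] => S
  | j :: s' =>
      match earliest pi (unmatched_nbrs E S j) with
      | Some k => ranking_final E pi s' (k |: S)
      | None => ranking_final E pi s' S
      end
  end.

Definition ranking_EZ (R : realType) (I J : finType) (E : I -> J -> bool)
  (i : I) : R :=
  (#|{perm I}|%:R)^-1 * nrounds_weight R J *
  \sum_(pi : {perm I}) \sum_(s : arrivals J)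
      ((i \in ranking_final E pi s finset.set0) : nat)%:R.

(* Clairvoyant policies: for each arrival sequence, a probability
   distribution over matchings of that sequence (m t = Some k means the
   arrival in round t is matched to k). *)
Definition matching_of (I J : finType) (E : I -> J -> bool) (s : arrivals J)
  (m : {ffun 'I_#|J| -> option I}) : bool :=
  [forall t, match m t with Some k => E k (tnth s t) | None => true end] &&
  [forall t, forall t', ((m t != None) && (m t == m t')) ==> (t == t')].

Definition clairvoyant_policy (R : realType) (I J : finType)
  (E : I -> J -> bool)
  (p : arrivals J -> {ffun 'I_#|J| -> option I} -> R) : Prop :=
  [/\ forall s m, 0 <= p s m,
      forall s m, ~~ matching_of E s m -> p s m = 0
    & forall s, \sum_m p s m = 1].

Definition clair_EZ (R : realType) (I J : finType)
  (p : arrivals J -> {ffun 'I_#|J| -> option I} -> R) (i : I) : R :=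
  nrounds_weight R J *
  \sum_(s : arrivals J) \sum_m p s m * ([exists t, m t == Some i] : nat)%:R.

Definition ifm_obj (R : realType) (I : finType) (x : I -> R) : R :=
  inf (range x).

Definition gfm_obj (R : realType) (I : finType) (G : {set {set I}})
  (x : I -> R) : R :=
  inf ((fun g : {set I} => (#|g|%:R)^-1 * \sum_(i in g) x i)
         @` [set g | g \in G]).

Definition OPT_IFM (R : realType) (I J : finType) (E : I -> J -> bool) : R :=
  sup [set v | exists p, clairvoyant_policy E p /\ v = ifm_obj (clair_EZ p)].

Definition OPT_GFM (R : realType) (I J : finType) (E : I -> J -> bool)
  (G : {set {set I}}) : R :=
  sup [set v | exists p, clairvoyant_policy E p /\ v = gfm_obj G (clair_EZ p)].

(* Take n = K^2 agents and one online type per agent, where type 0 is adjacent to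
   every agent and every other type j only to agent j; agent 0 is then reachable
   only through type 0.  Clairvoyantly, matching the first arrival of each type j to
   agent j matches every agent with probability 1 - (1 - 1/n)^n >= 1/2.  Online,
   agent 0 can only be taken by a type-0 arrival in some round t, when at least
   n - t agents are free and all of them are candidates.  GREEDY then picks agent 0
   with probability at most 1/(n - t).  RANKING picks it only if at most m of the
   agents not yet seen as arrival types precede it in the random order, m being
   the number of earlier type-0 arrivals; by exchangeability of the order this has
   probability at most (m + 1)/(n - t), and E[m + 1] <= 2.  Summing over t gives
   E[Z_0] <= 2 H_n / n <= 2 (K + n/K) / n = 4/K. *)

From HB Require Import structures.
From mathcomp Require Import all_boot all_order all_algebra all_fingroup.
From mathcomp Require Import all_classical all_reals.
From mathcomp Require Import zify ring lra.
Import Order.TTheory GRing.Theory Num.Theory.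
Set Implicit Arguments. Unset Strict Implicit. Unset Printing Implicit Defensive.
Local Open Scope ring_scope.

Section TupleSums.
Variables (R : realType) (J : finType) (n : nat).

Lemma sum_tuple_prod (f : 'I_n -> J -> R) :
  \sum_(s : n.-tuple J) \prod_(t < n) f t (tnth s t) =
  \prod_(t < n) \sum_(j : J) f t j.
Proof.
rewrite bigA_distr_bigA /= (reindex (@finfun_of_tuple J n)) /=; last first.
  by exists (@tuple_of_finfun J n) => s _;
     [apply: finfun_of_tupleK | apply: tuple_of_finfunK].
by apply: eq_bigr => s _; apply: eq_bigr => t _; rewrite ffunE.
Qed.

Lemma sum_eq_indicator (x : J) : \sum_(j : J) ((j == x) : nat)%:R = 1 :> R.
Proof. by rewrite (bigD1 x) //= eqxx big1 ?addr0 // => j /negbTE ->. Qed.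

Lemma sum_tnth_fixed (A : {set 'I_n}) (x : J) :
  \sum_(s : n.-tuple J) \prod_(t in A) ((tnth s t == x) : nat)%:R
    = #|J|%:R ^+ (n - #|A|) :> R.
Proof.
rewrite (eq_bigr (fun s => \prod_(t < n)
    (if t \in A then ((tnth s t == x) : nat)%:R else 1))); last first.
  by move=> s _; rewrite big_mkcond.
rewrite (sum_tuple_prod (fun t j => if t \in A then ((j == x) : nat)%:R else 1)).
rewrite (bigID (mem A)) /= (eq_bigr (fun _ => 1)); last first.
  by move=> t ->; rewrite sum_eq_indicator.
rewrite big1_eq mul1r (eq_bigr (fun _ => #|J|%:R)); last first.
  by move=> t /negbTE ->; rewrite sumr_const.
rewrite prodr_const; congr (_ ^+ _).
transitivity #|~: A|; first by apply: eq_card => t; rewrite !inE.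
by have := cardsC A; rewrite card_ord => /(congr1 (subn^~ #|A|)); rewrite addKn.
Qed.

Lemma sum_tnth_eq (t0 : 'I_n) (x : J) :
  \sum_(s : n.-tuple J) ((tnth s t0 == x) : nat)%:R = #|J|%:R ^+ n.-1 :> R.
Proof.
have := sum_tnth_fixed [set t0] x; rewrite cards1 subn1 => <-.
by apply: eq_bigr => s _; rewrite big_set1.
Qed.

Lemma sum_tnth_eq2 (t0 t1 : 'I_n) (x : J) : t0 != t1 ->
  \sum_(s : n.-tuple J) ((tnth s t0 == x) : nat)%:R * ((tnth s t1 == x) : nat)%:R
    = #|J|%:R ^+ n.-2 :> R.
Proof.
move=> t01; have := sum_tnth_fixed [set t0; t1] x.
rewrite cards2 t01 subn2 => <-.
by apply: eq_bigr => s _; rewrite big_setU1 ?big_set1 ?inE //=.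
Qed.

Lemma sum_tuple_notin (i : J) :
  \sum_(s : n.-tuple J) ((i \notin s) : nat)%:R = (#|J|.-1)%:R ^+ n :> R.
Proof.
transitivity (\sum_(s : n.-tuple J) \prod_(t < n) ((tnth s t != i) : nat)%:R : R).
  apply: eq_bigr => s _.
  case: (boolP (i \in s)) => [/tnthP [t ->] | iNs].
    by rewrite (bigD1 t) //= eqxx mul0r.
  rewrite big1 // => t _; apply/eqP; rewrite pnatr_eq1 eqb1.
  by apply: contraNneq iNs => <-; rewrite mem_tnth.
rewrite (sum_tuple_prod (fun _ j => ((j != i) : nat)%:R)) prodr_const card_ord.
congr (_ ^+ _); rewrite -(cardC1 i) -sumr_const [RHS]big_mkcond /=.
by apply: eq_bigr => j _; rewrite !inE; case: (j != i).
Qed.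

End TupleSums.

Section ArrivalWeight.
Variables (R : realType) (J : finType).

Lemma nrounds_weight_ge0 : 0 <= nrounds_weight R J.
Proof. by rewrite invr_ge0 exprn_ge0 ?ler0n. Qed.

Lemma nrounds_weight_card : nrounds_weight R J * #|{: arrivals J}|%:R = 1.
Proof. by rewrite card_tuple natrX mulVf // -natrX pnatr_eq0 expn_eq0; case: #|J|. Qed.

Lemma nrounds_weight_pred2 :
  nrounds_weight R J * ((#|J|.-1)%:R * #|J|%:R ^+ #|J|.-2) <= #|J|%:R^-1.
Proof.
rewrite /nrounds_weight; case: #|J| => [|[|m]] /=; try by rewrite !mul0r ?mulr0 invr_ge0.
set q : R := m.+2%:R; have q0 : 0 < q by rewrite ltr0n.
have -> : q ^- m.+2 * (m.+1%:R * q ^+ m) = m.+1%:R / (q * q).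
  by rewrite !exprS; field; rewrite expf_neq0 ?gt_eqF //; have := ler0n R m; lra.
by rewrite ler_pdivrMr ?mulr_gt0 // mulrA mulVf ?gt_eqF // mul1r ler_nat.
Qed.

Hypothesis J0 : (0 < #|J|)%N.

Lemma nrounds_weight_pred : nrounds_weight R J * #|J|%:R ^+ #|J|.-1 = #|J|%:R^-1.
Proof.
rewrite /nrounds_weight -(prednK J0) exprS invfM -mulrA mulVf ?mulr1 //.
by rewrite expf_neq0 // pnatr_eq0.
Qed.

End ArrivalWeight.

Section Mean.
Variables (R : realType) (T : finType) (N : {set T}) (f : T -> R).
Hypothesis N0 : (0 < #|N|)%N.

Lemma mean_le B : {in N, forall k, f k <= B} -> #|N|%:R^-1 * \sum_(k in N) f k <= B.
Proof.
move=> fB; rewrite mulrC ler_pdivrMr ?ltr0n // mulr_natr -sumr_const.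
exact: ler_sum.
Qed.

Lemma mean_le_inv_add a B : 0 <= B -> f a <= 1 ->
  {in N, forall k, k != a -> f k <= B} ->
  #|N|%:R^-1 * \sum_(k in N) f k <= #|N|%:R^-1 + B.
Proof.
move=> B0 f1 fB.
have : \sum_(k in N) f k <= \sum_(k in N) (((k == a) : nat)%:R + B).
  apply: ler_sum => k kN; case: eqVneq => [-> | ka].
    by apply: le_trans f1 _; rewrite lerDl.
  by rewrite add0r fB.
rewrite big_split sumr_const /= => hS.
have hI : \sum_(k in N) ((k == a) : nat)%:R <= 1 :> R.
  apply: le_trans (_ : _ <= \sum_k ((k == a) : nat)%:R) _; last first.
    by rewrite sum_eq_indicator.
  rewrite [leRHS](bigID (mem N)) /= lerDl.
  by apply: sumr_ge0 => k _; rewrite ler0n.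
rewrite mulrC ler_pdivrMr ?ltr0n // mulrDl mulVf ?pnatr_eq0 -?lt0n // mulr_natr.
by apply: le_trans hS _; rewrite lerD2r.
Qed.

End Mean.

Section Greedy.
Variables (R : realType) (I J : finType) (E : I -> J -> bool).

Lemma greedy_prob_bounds s S i : 0 <= greedy_prob R E s S i <= 1.
Proof.
elim: s S => [|j s IH] S /=; first by case: (i \in S); rewrite ?ler01 ?lexx.
case: ifP => [_|/negbT N0]; first exact: IH.
have N0' : (0 < #|unmatched_nbrs E S j|)%N by rewrite card_gt0.
apply/andP; split; last by apply: mean_le => // k _; case/andP: (IH (k |: S)).
by rewrite mulr_ge0 ?invr_ge0 ?ler0n // sumr_ge0 // => k _; case/andP: (IH (k |: S)).
Qed.

Variables (x : J) (a : I).
Hypothesis x_full : forall k, E k x.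
Hypothesis a_only_x : forall j, j != x -> ~~ E a j.

Lemma greedy_prob_le s (S : {set I}) c :
  a \notin S -> (#|S| <= c)%N -> (c + size s <= #|I|)%N ->
  greedy_prob R E s S a <=
  \sum_(0 <= t < size s) ((nth x s t == x) : nat)%:R / (#|I| - c - t)%:R.
Proof.
elim: s S c => [|j s IH] S c aS Sc cs /=; first by rewrite big_nil (negbTE aS).
rewrite /= in cs; rewrite big_nat_recl //=.
set B := \sum_(0 <= t < size s) _.
have IHB (S' : {set I}) : a \notin S' -> (#|S'| <= c.+1)%N -> greedy_prob R E s S' a <= B.
  move=> aS' S'c; rewrite /B (eq_bigr (fun t => ((nth x s t == x) : nat)%:R /
    (#|I| - c.+1 - t)%:R)); first by apply: IH; rewrite // addSnnS.
  by move=> t _; rewrite -!subnDA addnS addSn.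
have B0 : 0 <= B by apply: sumr_ge0 => t _; rewrite divr_ge0 ?ler0n.
have cS k : (#|k |: S| <= c.+1)%N by rewrite cardsU1; case: (k \in S) => /=; lia.
case: ifP => [_ | /negbT N0].
  by apply: le_trans (IHB S aS _) _; [lia | rewrite lerDr divr_ge0 ?ler0n].
set N := unmatched_nbrs E S j.
have N0' : (0 < #|N|)%N by rewrite card_gt0.
case: (eqVneq j x) => [jx | jx].
- have NS : (#|I| - c <= #|N|)%N.
    have -> : N = ~: S by apply/setP => k; rewrite !inE jx x_full.
    by have := cardsC S; lia.
  apply: le_trans (mean_le_inv_add N0' (a := a) B0 _ _) _.
  + by case/andP: (greedy_prob_bounds s (a |: S) a).
  + by move=> k _ ka; apply: IHB; rewrite // in_setU1 negb_or eq_sym ka.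
  rewrite subn0 mul1r lerD2r lef_pV2 ?posrE ?ltr0n ?ler_nat //; lia.
- rewrite /= mul0r add0r; apply: mean_le => // k kN; apply: IHB => //.
  rewrite in_setU1 negb_or aS andbT; apply: contraTneq kN => <-.
  by rewrite inE negb_and a_only_x.
Qed.

Lemma greedy_EZ_le : (#|J| <= #|I|)%N -> (0 < #|J|)%N ->
  greedy_EZ R E a <= #|J|%:R^-1 * \sum_(t < #|J|) ((#|I| - t)%:R)^-1.
Proof.
move=> JI J0.
apply: (@le_trans _ _ (nrounds_weight R J * \sum_(s : arrivals J)
   \sum_(t < #|J|) ((tnth s t == x) : nat)%:R / (#|I| - t)%:R)).
  apply: ler_wpM2l; first exact: nrounds_weight_ge0.
  apply: ler_sum => s _.
  have := @greedy_prob_le s finset.set0 0; rewrite inE cards0 size_tuple big_mkord.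
  by under eq_bigr do rewrite subn0 -tnth_nth; apply.
rewrite exchange_big /= !mulr_sumr; apply: ler_sum => t _.
by rewrite -big_distrl /= sum_tnth_eq mulrA nrounds_weight_pred.
Qed.

End Greedy.

Lemma harmonic_le (R : realType) (K T : nat) : (0 < K)%N ->
  \sum_(t < T) ((T - t)%:R)^-1 <= (minn T K)%:R + T%:R / K%:R :> R.
Proof.
move=> K0; elim: T => [|T IH]; first by rewrite big_ord0 min0n mul0r addr0.
rewrite big_ord_recl subn0.
rewrite (eq_bigr (fun t : 'I_T => ((T - t)%:R)^-1)); last first.
  by move=> t _; rewrite /bump /= subSS.
have K0' : (0 : R) < K%:R by rewrite ltr0n.
have TK : T.+1%:R / K%:R = T%:R / K%:R + K%:R^-1 :> R by rewrite -natr1 mulrDl mul1r.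
case: (ltnP T K) => hTK.
  have -> : minn T.+1 K = (minn T K).+1 by lia.
  have h1 : (T.+1%:R)^-1 <= 1 :> R by rewrite invf_le1 ?ltr0n // ler1n.
  apply: le_trans (lerD h1 IH) _; rewrite TK -natr1.
  have : 0 <= K%:R^-1 :> R by rewrite invr_ge0 ler0n.
  lra.
have -> : minn T.+1 K = minn T K by lia.
have h1 : (T.+1%:R)^-1 <= K%:R^-1 :> R by rewrite lef_pV2 ?posrE ?ltr0n // ler_nat; lia.
by apply: le_trans (lerD h1 IH) _; rewrite TK; lra.
Qed.

Definition perm_rank (I : finType) (pi : {perm I}) (k : I) : nat := enum_rank (pi k).

Lemma perm_rank_inj (I : finType) (pi : {perm I}) : injective (perm_rank pi).
Proof. by move=> k1 k2 /val_inj /enum_rank_inj /perm_inj. Qed.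

Section RankingMatch.
Variables (I : finType) (E : I -> I -> bool) (x : I).
Hypothesis x_full : forall k, E k x.
Hypothesis only_self : forall k j, j != x -> E k j -> k = j.

(* An agent ranked before [x], free at the start and never an earlier arrival
   type, can only have been taken by an earlier arrival of type [x]. *)
Lemma ranking_final_mem pi s (S : {set I}) : x \notin S ->
  x \in ranking_final E pi s S ->
  exists2 t, (t < size s)%N /\ nth x s t = x &
   (#|[set k | [&& (perm_rank pi k < perm_rank pi x)%N, k \notin S & k \notin take t s]]|
      <= count_mem x (take t s))%N.
Proof.
elim: s S => [|j s IH] S xS /=; first by rewrite (negbTE xS).
rewrite /earliest; case: pickP => [k /andP [kN /forallP kmin] | noN].
  have Ekj : E k j by move: kN; rewrite inE => /andP [].
  case: (eqVneq k x) => [kx | kx].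
    subst k; have jx : j = x by case: (eqVneq j x) => // jx; rewrite (only_self jx Ekj).
    move=> _; exists 0%N => //; rewrite leqn0 cards_eq0; apply/eqP/setP => k'.
    rewrite !inE; apply/negbTE/and3P => -[k'x k'S _].
    by move: (kmin k'); rewrite !inE jx x_full k'S /= leqNgt k'x.
  case/IH => [|t [ts st] tcount]; first by rewrite in_setU1 negb_or xS eq_sym kx.
  exists t.+1 => //=; case: (eqVneq j x) => [jx | jx].
    apply: leq_trans (_ : _ <= #|k |: [set k0 | [&& (perm_rank pi k0 <
      perm_rank pi x)%N, k0 \notin k |: S & k0 \notin take t s]]|)%N _.
      apply: subset_leq_card; apply/fintype.subsetP => k0; rewrite !inE !negb_or.
      by case: (eqVneq k0 k) => //= _ /and4P [-> -> _ ->].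
    by rewrite cardsU1; apply: leq_add; first case: (_ \notin _).
  rewrite -(only_self jx Ekj) add0n; apply: leq_trans tcount.
  apply: subset_leq_card; apply/fintype.subsetP => k0; rewrite !inE !negb_or.
  by case/and4P => -> -> -> ->.
case/IH => // t [ts st] tcount.
exists t.+1 => //=; apply: leq_trans (leq_addl _ _); apply: leq_trans tcount.
apply: subset_leq_card; apply/fintype.subsetP => k0; rewrite !inE negb_or.
by case/and3P => -> -> /andP [_ ->].
Qed.

End RankingMatch.

Definition preceding (I : finType) (pi : {perm I}) (A : {set I}) (v : I) : nat :=
  #|[set k in A | (perm_rank pi k < perm_rank pi v)%N]|.

Section Preceding.
Variable I : finType.

Lemma card_few_preceding (pi : {perm I}) (U : {set I}) m :
  (#|[set v in U | (preceding pi (U :\ v) v <= m)%N]| <= m.+1)%N.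
Proof.
set V := [set v in U | _].
have [-> | [v1 v1V]] := set_0Vmem V; first by rewrite cards0.
have [v0 v0V' v0max] := @arg_maxnP _ v1 (mem V) (perm_rank pi) v1V.
have v0V : v0 \in V := v0V'.
rewrite (cardsD1 v0) v0V add1n ltnS.
have : (preceding pi (U :\ v0) v0 <= m)%N by move: v0V; rewrite inE => /andP [].
apply: leq_trans; apply: subset_leq_card; apply/fintype.subsetP => v /setD1P [vv0 vV].
have : (perm_rank pi v <= perm_rank pi v0)%N := v0max v vV.
rewrite leq_eqVlt => /orP [/eqP/perm_rank_inj vv0' | lt_v].
  by rewrite vv0' eqxx in vv0.
by move: vV; rewrite !inE vv0 lt_v => /andP [-> _].
Qed.

Variables (a : I) (W : {set I}).
Hypothesis aW : a \notin W.

Lemma preceding_tperm (pi : {perm I}) v : v \in a |: W ->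
  preceding (tperm a v * pi)%g W a = preceding pi ((a |: W) :\ v) v.
Proof.
move=> vU; rewrite /preceding -(card_preimset _ (@perm_inj _ (tperm a v))).
apply: eq_card => k; rewrite !inE /perm_rank !permM tpermL tpermK.
congr (_ && _); move: vU; rewrite in_setU1.
case: tpermP => [-> | -> | /eqP/negbTE -> /eqP ->] //.
- by case: (eqVneq v a) => [-> | _] /= vW; rewrite ?(negbTE aW) ?eqxx ?vW.
- by rewrite eqxx (negbTE aW).
Qed.

Lemma sum_preceding_le m :
  (#|W|.+1 * \sum_(pi : {perm I}) (preceding pi W a <= m)%N <= m.+1 * #|{perm I}|)%N.
Proof.
have cU : #|a |: W| = #|W|.+1 by rewrite cardsU1 aW.
rewrite -cU -sum_nat_const.
rewrite (eq_bigr (fun v => \sum_(pi : {perm I}) (preceding (tperm a v * pi)%g W a <= m))%N);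
  last by move=> v _; apply: (reindex_inj (mulgI (tperm a v))).
rewrite exchange_big /=.
apply: (@leq_trans (\sum_(pi : {perm I}) m.+1)); last by rewrite sum_nat_const mulnC.
apply: leq_sum => pi _; apply: leq_trans (card_few_preceding pi (a |: W) m).
rewrite -sum1_card [leqRHS](eq_bigl (fun v => (v \in a |: W) &&
  (preceding pi ((a |: W) :\ v) v <= m)%N)); last by move=> v; rewrite !inE.
rewrite big_mkcondr /=; apply: leq_sum => v vU.
by rewrite preceding_tperm //; case: (_ <= m)%N.
Qed.

End Preceding.

Lemma count_mem_take (T : eqType) (x0 x : T) (s : seq T) t :
  count_mem x (take t s) = (\sum_(i < size s) ((i < t) && (nth x0 s i == x)))%N.
Proof.
elim: s t => [|y s IH] [|t] /=; rewrite ?big_ord0 // big_ord_recl /= ?IH //.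
by rewrite big1.
Qed.

Section EarlierArrivals.
Variables (R : realType) (J : finType) (x : J).

Lemma sum_arrival_count (t : 'I_#|J|) :
  \sum_(s : arrivals J) ((tnth s t == x) : nat)%:R * (count_mem x (take t s)).+1%:R
    <= #|J|%:R ^+ #|J|.-1 + (#|J|.-1)%:R * #|J|%:R ^+ #|J|.-2 :> R.
Proof.
under eq_bigr => s _ do
  rewrite (count_mem_take x) size_tuple -natr1 mulrDr mulr1 natr_sum mulr_sumr.
rewrite big_split /= addrC sum_tnth_eq lerD2l exchange_big /=.
have -> : (#|J|.-1)%:R * #|J|%:R ^+ #|J|.-2 = \sum_(t' < #|J| | t' != t) #|J|%:R ^+ #|J|.-2 :> R.
  by rewrite sumr_const cardC1 card_ord mulr_natl.
rewrite [leLHS](bigD1 t) //= big1 ?add0r => [|s]; last by rewrite ltnn mulr0.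
apply: ler_sum => t' t't; rewrite -(@sum_tnth_eq2 R J #|J| t t' x) 1?eq_sym //.
apply: ler_sum => s _; rewrite -tnth_nth ler_wpM2l ?ler0n // ler_nat; by case: (t' < t)%N.
Qed.

Lemma arrival_count_mean (t : 'I_#|J|) :
  nrounds_weight R J *
  \sum_(s : arrivals J) ((tnth s t == x) : nat)%:R * (count_mem x (take t s)).+1%:R
    <= 2 / #|J|%:R.
Proof.
have J0 : (0 < #|J|)%N by apply/card_gt0P; exists x.
apply: le_trans (ler_wpM2l (nrounds_weight_ge0 R J) (sum_arrival_count t)) _.
rewrite mulrDr nrounds_weight_pred // mulr2n mulrDl mul1r lerD2l.
exact: nrounds_weight_pred2.
Qed.

End EarlierArrivals.

Section RankingEZ.
Variables (R : realType) (I : finType) (E : I -> I -> bool) (x : I).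
Hypothesis x_full : forall k, E k x.
Hypothesis only_self : forall k j, j != x -> E k j -> k = j.

Definition unseen (s : seq I) t := [set k | (k \notin take t s) && (k != x)].

Lemma card_unseen (s : seq I) t : (#|I| - t <= #|unseen s t|.+1)%N.
Proof.
have : (#|~: unseen s t| <= t.+1)%N.
  apply: leq_trans (_ : #|x |: [set k | k \in take t s]| <= _)%N.
    by apply: subset_leq_card; apply/fintype.subsetP => k; rewrite !inE negb_and !negbK orbC.
  rewrite cardsU1 -add1n leq_add ?leq_b1 //.
  have -> : #|[set k | k \in take t s]| = #|take t s| by apply: eq_card => k; rewrite inE.
  apply: leq_trans (card_size (take t s)) _; rewrite size_take; case: ifP => //; lia.
by have := cardsC (unseen s t); lia.
Qed.

Lemma ranking_final_indicator_le pi (s : arrivals I) :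
  ((x \in ranking_final E pi s finset.set0) : nat)%:R <=
  \sum_(t < #|I|) ((tnth s t == x) : nat)%:R *
     ((preceding pi (unseen s t) x <= count_mem x (take t s))%N : nat)%:R :> R.
Proof.
case h: (x \in _) => /=; last by apply: sumr_ge0 => t _; rewrite mulr_ge0 ?ler0n.
have [t [ts st] tcount] := ranking_final_mem x_full only_self (negbT (finset.in_set0 x)) h.
move: ts; rewrite size_tuple => ts.
rewrite (bigD1 (Ordinal ts)) //= (tnth_nth x) st eqxx mul1r.
have -> : (preceding pi (unseen s t) x <= count_mem x (take t s))%N.
  apply: leq_trans tcount; apply: subset_leq_card; apply/fintype.subsetP => k.
  by rewrite !inE => /andP [/andP [-> _] ->].
by rewrite lerDl; apply: sumr_ge0 => t' _; rewrite mulr_ge0 ?ler0n.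
Qed.

Lemma mean_preceding_le (s : seq I) (t : 'I_#|I|) m :
  (#|{perm I}|%:R)^-1 * \sum_pi ((preceding pi (unseen s t) x <= m)%N : nat)%:R
    <= m.+1%:R / (#|I| - t)%:R :> R.
Proof.
have xW : x \notin unseen s t by rewrite inE eqxx andbF.
have P0 : (0 : R) < #|{perm I}|%:R by rewrite ltr0n; apply/card_gt0P; exists 1%g.
have t0 : (0 : R) < (#|I| - t)%:R by rewrite ltr0n subn_gt0.
rewrite -natr_sum mulrC ler_pdivrMr // mulrAC ler_pdivlMr // -!natrM ler_nat.
apply: leq_trans (sum_preceding_le xW m); rewrite mulnC leq_mul2r.
by rewrite card_unseen orbT.
Qed.

Lemma mean_ranking_le (s : arrivals I) :
  (#|{perm I}|%:R)^-1 * \sum_pi ((x \in ranking_final E pi s finset.set0) : nat)%:R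
    <= \sum_(t < #|I|) ((tnth s t == x) : nat)%:R *
         ((count_mem x (take t s)).+1%:R / (#|I| - t)%:R) :> R.
Proof.
apply: le_trans (ler_wpM2l _ (ler_sum _ (fun pi _ => ranking_final_indicator_le pi s))) _.
  by rewrite invr_ge0 ler0n.
rewrite exchange_big mulr_sumr; apply: ler_sum => t _.
rewrite -mulr_sumr mulrCA; apply: ler_wpM2l; first by rewrite ler0n.
exact: mean_preceding_le.
Qed.

Lemma ranking_EZ_le :
  ranking_EZ R E x <= 2 / #|I|%:R * \sum_(t < #|I|) ((#|I| - t)%:R)^-1.
Proof.
have -> : ranking_EZ R E x = nrounds_weight R I * \sum_(s : arrivals I)
    ((#|{perm I}|%:R)^-1 * \sum_pi ((x \in ranking_final E pi s finset.set0) : nat)%:R).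
  by rewrite /ranking_EZ -mulr_sumr exchange_big /= mulrA [_ * nrounds_weight _ _]mulrC.
apply: le_trans (ler_wpM2l (nrounds_weight_ge0 R I)
  (ler_sum _ (fun s _ => mean_ranking_le s))) _.
rewrite exchange_big /= !mulr_sumr; apply: ler_sum => t _.
under eq_bigr do rewrite mulrA.
rewrite -big_distrl /= mulrA ler_wpM2r ?invr_ge0 ?ler0n //.
exact: arrival_count_mean.
Qed.

End RankingEZ.

Lemma bernoulli_expn (m k : nat) : (m ^ k.+1 + k.+1 * m ^ k <= m.+1 ^ k.+1)%N.
Proof.
elim: k => [|k IH]; first by rewrite !expn1 expn0 muln1 addn1.
rewrite [(m.+1 ^ k.+2)%N]expnS; apply: leq_trans (leq_mul (leqnn m.+1) IH).
by rewrite !expnS; nia.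
Qed.

Lemma double_expn_le (m : nat) : (2 * m ^ m.+1 <= m.+1 ^ m.+1)%N.
Proof. by apply: leq_trans (bernoulli_expn m m); rewrite expnS; nia. Qed.

Section FirstArrivals.
Variables (R : realType) (I : finType) (E : I -> I -> bool).
Hypothesis E_refl : forall k, E k k.

Definition first_arrivals (s : arrivals I) : {ffun 'I_#|I| -> option I} :=
  [ffun t => if index (tnth s t) s == t then Some (tnth s t) else None].

Definition first_arrivals_policy (s : arrivals I) (m : {ffun 'I_#|I| -> option I}) : R :=
  ((m == first_arrivals s) : nat)%:R.

Lemma first_arrivals_matching s : matching_of E s (first_arrivals s).
Proof.
apply/andP; split; apply/forallP => t; rewrite ffunE; first by case: ifP.
apply/forallP => t'; apply/implyP; rewrite ffunE.
case: ifP => // /eqP it /andP [_ /eqP].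
by case: ifP => // /eqP it' [st]; apply/eqP/val_inj; rewrite /= -it -it' st.
Qed.

Lemma first_arrivals_clairvoyant : clairvoyant_policy E first_arrivals_policy.
Proof.
split=> [s m | s m | s]; first by rewrite ler0n.
  by rewrite /first_arrivals_policy; case: eqP => // -> /negP; rewrite first_arrivals_matching.
rewrite (bigD1 (first_arrivals s)) //= /first_arrivals_policy eqxx.
by rewrite big1 ?addr0 // => m /negbTE ->.
Qed.

Lemma first_arrivals_matched s i : [exists t, first_arrivals s t == Some i] = (i \in s).
Proof.
apply/existsP/idP => [[t] | iS].
  by rewrite ffunE; case: ifP => // _ /eqP [<-]; apply: mem_tnth.
have it : (index i s < #|I|)%N by rewrite -[X in (_ < X)%N](size_tuple s) index_mem.
by exists (Ordinal it); rewrite ffunE (tnth_nth i) /= nth_index // !eqxx.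
Qed.

Lemma first_arrivals_EZ_ge i : 2^-1 <= clair_EZ first_arrivals_policy i.
Proof.
have I0 : (0 < #|I|)%N by apply/card_gt0P; exists i.
have -> : clair_EZ first_arrivals_policy i =
    nrounds_weight R I * \sum_(s : arrivals I) ((i \in s) : nat)%:R.
  rewrite /clair_EZ; congr (_ * _); apply: eq_bigr => s _.
  rewrite (bigD1 (first_arrivals s)) //= /first_arrivals_policy eqxx mul1r.
  by rewrite big1 ?addr0 ?first_arrivals_matched // => m /negbTE ->; rewrite mul0r.
have split_in : \sum_(s : arrivals I) ((i \in s) : nat)%:R =
    #|{: arrivals I}|%:R - \sum_(s : arrivals I) ((i \notin s) : nat)%:R :> R.
  by rewrite -sumr_const -sumrB; apply: eq_bigr => s _; case: (i \in s); rewrite ?subr0 ?subrr.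
have missed : nrounds_weight R I * (#|I|.-1)%:R ^+ #|I| <= 2^-1.
  rewrite mulrC ler_pdivrMr ?exprn_gt0 ?ltr0n // -(ler_pM2l (_ : (0 : R) < 2)) //.
  rewrite mulrA mulfV ?pnatr_eq0 // mul1r.
  by have := double_expn_le #|I|.-1; rewrite prednK // -(ler_nat R) natrM !natrX.
rewrite split_in sum_tuple_notin mulrBr nrounds_weight_card; lra.
Qed.

End FirstArrivals.

Section Objectives.
Variables (R : realType) (I J : finType) (E : I -> J -> bool).
Implicit Type p : arrivals J -> {ffun 'I_#|J| -> option I} -> R.

Lemma greedy_EZ_ge0 i : 0 <= greedy_EZ R E i.
Proof.
rewrite mulr_ge0 ?nrounds_weight_ge0 // sumr_ge0 // => s _.
by case/andP: (greedy_prob_bounds R E s finset.set0 i).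
Qed.

Lemma ranking_EZ_ge0 i : 0 <= ranking_EZ R E i.
Proof.
apply: mulr_ge0; first by apply: mulr_ge0; [rewrite invr_ge0 ler0n | exact: nrounds_weight_ge0].
by apply: sumr_ge0 => pi _; apply: sumr_ge0 => s _; rewrite ler0n.
Qed.

Lemma clair_EZ_bounds p i : clairvoyant_policy E p -> 0 <= clair_EZ p i <= 1.
Proof.
case=> p0 _ p1; apply/andP; split.
  apply: mulr_ge0; first exact: nrounds_weight_ge0.
  by apply: sumr_ge0 => s _; apply: sumr_ge0 => m _; rewrite mulr_ge0.
rewrite -(nrounds_weight_card R J) ler_wpM2l ?nrounds_weight_ge0 // -sumr_const.
apply: ler_sum => s _; rewrite -[leRHS](p1 s); apply: ler_sum => m _.
by rewrite ler_piMr //; case: [exists _, _]; rewrite ?ler01 ?lexx.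
Qed.

Lemma ifm_obj_le (F : I -> R) i : (forall k, 0 <= F k) -> ifm_obj F <= F i.
Proof. by move=> F0; apply: ge_inf; [exists 0 => _ [k _ <-] | exists i]. Qed.

Lemma OPT_IFM_ge p c (i0 : I) : clairvoyant_policy E p ->
  (forall i, c <= clair_EZ p i) -> c <= OPT_IFM R E.
Proof.
move=> pE pc; apply: le_trans (_ : ifm_obj (clair_EZ p) <= _).
  by apply: lb_le_inf => [|_ [i _ <-]]; [exists (clair_EZ p i0), i0 | exact: pc].
apply: sup_ubound; last by exists p.
exists 1 => _ [q [qE ->]]; apply: le_trans (ifm_obj_le i0 _) _.
  by move=> i; case/andP: (clair_EZ_bounds i qE).
by case/andP: (clair_EZ_bounds i0 qE).
Qed.

Definition singletons : {set {set I}} := [set [set i] | i : I].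

Lemma gfm_obj_singletons (F : I -> R) : gfm_obj singletons F = ifm_obj F.
Proof.
rewrite /gfm_obj /ifm_obj; congr inf; apply/seteqP; split => v.
  by move=> [g /imsetP [i _ ->] <-]; exists i; rewrite // cards1 invr1 mul1r big_set1.
by move=> [i _ <-]; exists [set i]; [apply/imsetP; exists i | rewrite cards1 invr1 mul1r big_set1].
Qed.

Lemma OPT_GFM_singletons : OPT_GFM R E singletons = OPT_IFM R E.
Proof.
by rewrite /OPT_GFM /OPT_IFM; congr sup; apply/seteqP; split => v [p [pE ->]];
  exists p; rewrite ?gfm_obj_singletons.
Qed.

Lemma singletons_proper (i : I) : singletons != finset.set0 /\ finset.set0 \notin singletons.
Proof.
split; first by apply/set0Pn; exists [set i]; apply/imsetP; exists i.
by apply/imsetP => -[k _ e]; have := set11 k; rewrite -e inE.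
Qed.

End Objectives.

(* Agents and types are both ['I_n] with [n = K * K], written [(K * K).-1.+1] so
   that [ord0] exists. *)
Definition hub_agents (K : nat) : finType := 'I_(K * K).-1.+1.

Definition hub_edge (K : nat) (k j : hub_agents K) : bool := (j == ord0) || (k == j).
Arguments hub_edge : clear implicits.

Section Hub.
Variables (R : realType) (K : nat).
Hypothesis K0 : (0 < K)%N.

Lemma card_hub_agents : #|hub_agents K| = (K * K)%N.
Proof. by rewrite card_ord prednK // muln_gt0 K0. Qed.

Lemma hub_edge_hub k : hub_edge K k ord0.
Proof. by rewrite /hub_edge eqxx. Qed.

Lemma hub_edge_other k j : j != ord0 -> hub_edge K k j -> k = j.
Proof. by rewrite /hub_edge => /negbTE -> /eqP. Qed.

Lemma hub_harmonic_mean_le :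
  #|hub_agents K|%:R^-1 * \sum_(t < #|hub_agents K|) ((#|hub_agents K| - t)%:R)^-1
    <= 2 / K%:R :> R.
Proof.
have Kp : (0 : R) < K%:R by rewrite ltr0n.
have n0 : (0 : R) <= #|hub_agents K|%:R^-1 by rewrite invr_ge0 ler0n.
apply: le_trans (ler_wpM2l n0 (harmonic_le R #|hub_agents K| K0)) _.
have mK : (minn #|hub_agents K| K)%:R <= K%:R :> R by rewrite ler_nat geq_minr.
apply: le_trans (ler_wpM2l n0 (lerD mK (lexx _))) _.
rewrite card_hub_agents natrM le_eqVlt; apply/orP; left; apply/eqP.
by field; rewrite gt_eqF.
Qed.

Lemma greedy_hub_le : greedy_EZ R (hub_edge K) ord0 <= 2 / K%:R.
Proof.
apply: le_trans hub_harmonic_mean_le.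
apply: greedy_EZ_le => //; first exact: hub_edge_hub.
  by move=> j j0; apply/negP => /(hub_edge_other j0) e; rewrite e eqxx in j0.
by rewrite card_hub_agents muln_gt0 K0.
Qed.

Lemma ranking_hub_le : ranking_EZ R (hub_edge K) ord0 <= 4 / K%:R.
Proof.
apply: le_trans (ranking_EZ_le R hub_edge_hub hub_edge_other) _.
rewrite -mulrA; apply: le_trans (ler_wpM2l _ hub_harmonic_mean_le) _ => //; lra.
Qed.

Lemma OPT_hub_ge : 2^-1 <= OPT_IFM R (hub_edge K).
Proof.
apply: (OPT_IFM_ge ord0 (first_arrivals_clairvoyant _ _)) => [k | i].
  by rewrite /hub_edge eqxx orbT.
exact: first_arrivals_EZ_ge.
Qed.

End Hub.

Lemma exists_nat_div_le (R : realType) (c eps : R) : 0 <= c -> 0 < eps ->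
  exists2 K : nat, (0 < K)%N & c / K%:R <= eps.
Proof.
move=> c0 e0; exists (Num.Def.archi_bound (c / eps)).+1 => //.
have := archi_boundP (divr_ge0 c0 (ltW e0)) => ck.
rewrite ler_pdivrMr ?ltr0n // mulrC -ler_pdivrMr //.
by apply: ltW; apply: (lt_le_trans ck); rewrite ler_nat.
Qed.

Section HubRatio.
Variables (R : realType) (c : R) (alg : forall I J : finType, (I -> J -> bool) -> I -> R).
Hypothesis c0 : 0 <= c.
Hypothesis alg_ge0 : forall K i, 0 <= alg (hub_edge K) i.
Hypothesis alg_hub_le : forall K, (0 < K)%N -> alg (hub_edge K) ord0 <= c / K%:R.

Lemma hub_ratio_le eps : 0 < eps -> exists K,
  0 < OPT_IFM R (hub_edge K) /\
  ifm_obj (alg (hub_edge K)) <= eps * OPT_IFM R (hub_edge K).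
Proof.
move=> e0; have [K K0 cK] := exists_nat_div_le c0 (divr_gt0 e0 (ltr0Sn R 1)).
have opt := OPT_hub_ge R K.
exists K; split; first by apply: lt_le_trans opt; rewrite invr_gt0.
apply: le_trans (ifm_obj_le ord0 (@alg_ge0 K)) _.
apply: le_trans (le_trans (alg_hub_le K0) cK) _.
by have := ler_wpM2l (ltW e0) opt; lra.
Qed.

End HubRatio.

Lemma gfm_singletons_ratio (R : realType) (I J : finType) (E : I -> J -> bool)
    (F : I -> R) eps : (0 < #|I|)%N ->
  0 < OPT_IFM R E -> ifm_obj F <= eps * OPT_IFM R E ->
  [/\ singletons I != finset.set0, finset.set0 \notin singletons I,
      0 < OPT_GFM R E (singletons I)
    & gfm_obj (singletons I) F <= eps * OPT_GFM R E (singletons I)].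
Proof.
move=> /card_gt0P [i _] opt ratio; have [s1 s2] := singletons_proper i.
by rewrite OPT_GFM_singletons gfm_obj_singletons.
Qed.

Theorem theorem1 (R : realType) :
  (forall eps : R, 0 < eps ->
     exists (I J : finType) (E : I -> J -> bool),
       [/\ (0 < #|I|)%N, 0 < OPT_IFM R E
         & ifm_obj (greedy_EZ R E) <= eps * OPT_IFM R E]) /\
  (forall eps : R, 0 < eps ->
     exists (I J : finType) (E : I -> J -> bool),
       [/\ (0 < #|I|)%N, 0 < OPT_IFM R E
         & ifm_obj (ranking_EZ R E) <= eps * OPT_IFM R E]) /\
  (forall eps : R, 0 < eps ->
     exists (I J : finType) (E : I -> J -> bool) (G : {set {set I}}),
       [/\ G != finset.set0, finset.set0 \notin G, 0 < OPT_GFM R E G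
         & gfm_obj G (greedy_EZ R E) <= eps * OPT_GFM R E G]) /\
  (forall eps : R, 0 < eps ->
     exists (I J : finType) (E : I -> J -> bool) (G : {set {set I}}),
       [/\ G != finset.set0, finset.set0 \notin G, 0 < OPT_GFM R E G
         & gfm_obj G (ranking_EZ R E) <= eps * OPT_GFM R E G]).
Proof.
have greedy := @hub_ratio_le R 2 (fun I J E => greedy_EZ R E) (ler0n R 2)
  (fun K => greedy_EZ_ge0 R (hub_edge K)) (fun K => @greedy_hub_le R K).
have ranking := @hub_ratio_le R 4 (fun I J E => ranking_EZ R E) (ler0n R 4)
  (fun K => ranking_EZ_ge0 R (hub_edge K)) (fun K => @ranking_hub_le R K).
have hub0 K : (0 < #|hub_agents K|)%N by rewrite card_ord.
split; [|split; [|split]] => eps e0.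
- have [K [opt ratio]] := greedy eps e0.
  by exists (hub_agents K), (hub_agents K), (hub_edge K).
- have [K [opt ratio]] := ranking eps e0.
  by exists (hub_agents K), (hub_agents K), (hub_edge K).
- have [K [opt ratio]] := greedy eps e0.
  exists (hub_agents K), (hub_agents K), (hub_edge K), (singletons _).
  exact: gfm_singletons_ratio.
- have [K [opt ratio]] := ranking eps e0.
  exists (hub_agents K), (hub_agents K), (hub_edge K), (singletons _).
  exact: gfm_singletons_ratio.
Qed.
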